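(* Let $F:\mathcal C\to\mathcal D$ be a left multiadjoint and let $\mathcal M$ be a left-cancellable composable class of morphisms in $\mathcal D$. If $\perp$ is an independence relation on $\mathcal D_{\mathcal M}$ satisfying uniqueness, then the independence relation $F^{-1}(\perp)$ on $\mathcal C_{F^{-1}(\mathcal M)}$ satisfies uniqueness, where $F^{-1}(\mathcal M)$ is the class of morphisms $f$ of $\mathcal C$ with $F(f)\in\mathcal M$.
   Context: A class $\mathcal M$ of morphisms is composable if closed under composition and containing all isomorphisms, and left-cancellable if $gf\in\mathcal M$ implies $f\in\mathcal M$. $\mathcal D_{\mathcal M}$ is the subcategory with all objects and morphisms in $\mathcal M$. A functor $F$ is a left multiadjoint if for every object $D$ of $\mathcal D$ there is a family $\{e_k:F(C_k)\to D\}_{k\in K}$ such that every $e:F(C)\to D$ factors as $e=e_kF(f)$ for a unique $k$ and unique $f:C\to C_k$. A commuting square consists of $C\to A$, $C\to B$, $A\to M$, $B\to M$ with equal composites $C\to M$; base span $A\leftarrow C\to B$. An independence relation is a class of commuting squares (called independent); $F^{-1}(\perp)$ consists of the commuting squares whose image under $F$ is in $\perp$. Uniqueness: any two independent squares with the same base span $A\leftarrow C\to B$ and tops $M,M'$ can be amalgamated, i.e. there are $N$ and $M\to N$, $M'\to N$ such that the two composites $A\to N$ agree and the two composites $B\to N$ agree. *)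

From Stdlib Require Import ProofIrrelevance.

Set Implicit Arguments.
Unset Strict Implicit.

(* Categories; comp g f is "g after f". *)
Record Category := {
  Ob :> Type;
  Hom : Ob -> Ob -> Type;
  idm : forall A, Hom A A;
  comp : forall A B C, Hom B C -> Hom A B -> Hom A C;
  comp_assoc : forall A B C D (h : Hom C D) (g : Hom B C) (f : Hom A B),
      comp h (comp g f) = comp (comp h g) f;
  comp_id_l : forall A B (f : Hom A B), comp (idm B) f = f;
  comp_id_r : forall A B (f : Hom A B), comp f (idm A) = f
}.

Arguments Hom {c} _ _.
Arguments idm {c} _.
Arguments comp {c A B C} _ _.

Record Functor (C D : Category) := {
  fobj :> C -> D;
  fmap : forall A B, @Hom C A B -> @Hom D (fobj A) (fobj B);
  fmap_id : forall A, fmap (idm A) = idm (fobj A);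
  fmap_comp : forall A B E (g : @Hom C B E) (f : @Hom C A B),
      fmap (comp g f) = comp (fmap g) (fmap f)
}.

Arguments fmap {C D} f0 {A B} _.

Definition MorClass (C : Category) := forall A B : C, @Hom C A B -> Prop.

Definition is_iso (C : Category) (A B : C) (f : Hom A B) : Prop :=
  exists g : Hom B A, comp g f = idm A /\ comp f g = idm B.

Definition composable (C : Category) (M : MorClass C) : Prop :=
  (forall (A B E : C) (g : Hom B E) (f : Hom A B), M _ _ g -> M _ _ f -> M _ _ (comp g f))
  /\ (forall (A B : C) (f : Hom A B), is_iso f -> M _ _ f).

Definition left_cancellable (C : Category) (M : MorClass C) : Prop :=
  forall (A B E : C) (g : Hom B E) (f : Hom A B), M _ _ (comp g f) -> M _ _ f.

Definition left_multiadjoint (C D : Category) (F : Functor C D) : Prop :=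
  forall d : D, exists (K : Type) (Ck : K -> C) (e : forall k, @Hom D (F (Ck k)) d),
    forall (c : C) (u : @Hom D (F c) d),
      exists (k : K) (f : @Hom C c (Ck k)),
        u = comp (e k) (fmap F f) /\
        forall (k' : K) (f' : @Hom C c (Ck k')),
          u = comp (e k') (fmap F f') ->
          existT (fun j => @Hom C c (Ck j)) k' f' = existT _ k f.

Section Sub.
Variables (C : Category) (M : MorClass C).
Hypothesis Mcomp : forall (A B E : C) (g : Hom B E) (f : Hom A B),
    @M _ _ g -> @M _ _ f -> @M _ _ (comp g f).
Hypothesis Mid : forall A : C, @M _ _ (idm A).

Definition subHom (A B : C) := { f : @Hom C A B | @M _ _ f }.
Definition subId (A : C) : subHom A A := exist _ (idm A) (Mid A).
Definition subComp (A B E : C) (g : subHom B E) (f : subHom A B) : subHom A E :=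
  exist _ (comp (proj1_sig g) (proj1_sig f)) (Mcomp (proj2_sig g) (proj2_sig f)).

Lemma subComp_assoc A B E G (h : subHom E G) (g : subHom B E) (f : subHom A B) :
  subComp h (subComp g f) = subComp (subComp h g) f.
Proof. apply eq_sig_hprop; [intros; apply proof_irrelevance|]; simpl; apply comp_assoc. Qed.
Lemma subComp_id_l A B (f : subHom A B) : subComp (subId B) f = f.
Proof. apply eq_sig_hprop; [intros; apply proof_irrelevance|]; simpl; apply comp_id_l. Qed.
Lemma subComp_id_r A B (f : subHom A B) : subComp f (subId A) = f.
Proof. apply eq_sig_hprop; [intros; apply proof_irrelevance|]; simpl; apply comp_id_r. Qed.

Definition SubCat : Category :=
  {| Ob := Ob C; Hom := subHom; idm := subId; comp := subComp;
     comp_assoc := subComp_assoc; comp_id_l := subComp_id_l; comp_id_r := subComp_id_r |}.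
End Sub.

Lemma composable_comp (C : Category) (M : MorClass C) (H : composable M) :
  forall (A B E : C) (g : Hom B E) (f : Hom A B), M _ _ g -> M _ _ f -> M _ _ (comp g f).
Proof. apply H. Qed.

Lemma composable_id (C : Category) (M : MorClass C) (H : composable M) :
  forall A : C, M _ _ (idm A).
Proof. intro A. apply (proj2 H). exists (idm A). split; apply comp_id_l. Qed.

Definition subcat (C : Category) (M : MorClass C) (H : composable M) : Category :=
  SubCat (composable_comp H) (composable_id H).

Definition preimage_class (C D : Category) (F : Functor C D) (M : MorClass D) : MorClass C :=
  fun A B f => M _ _ (fmap F f).

Lemma preimage_composable (C D : Category) (F : Functor C D) (M : MorClass D) :
  composable M -> composable (preimage_class F M).
Proof.
  intros [Hc Hi]; split; unfold preimage_class.
  - intros A B E g f Hg Hf. rewrite fmap_comp. now apply Hc.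
  - intros A B f [g [H1 H2]]. apply Hi. exists (fmap F g).
    now rewrite <- !fmap_comp, H1, H2, !fmap_id.
Qed.

Section Restrict.
Variables (C D : Category) (F : Functor C D) (M : MorClass D) (HM : composable M).

Definition restr_map (A B : C)
  (f : @Hom (subcat (preimage_composable F HM)) A B) :
  @Hom (subcat HM) (F A) (F B) := exist _ (fmap F (proj1_sig f)) (proj2_sig f).

Lemma restr_id (A : C) : restr_map (idm (c := subcat (preimage_composable F HM)) A)
                         = idm (c := subcat HM) (F A).
Proof. apply eq_sig_hprop; [intros; apply proof_irrelevance|]; simpl; apply fmap_id. Qed.

Lemma restr_comp (A B E : C) (g : @Hom (subcat (preimage_composable F HM)) B E)
  (f : @Hom (subcat (preimage_composable F HM)) A B) :
  restr_map (comp g f) = comp (restr_map g) (restr_map f).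
Proof. apply eq_sig_hprop; [intros; apply proof_irrelevance|]; simpl; apply fmap_comp. Qed.

Definition restrict : Functor (subcat (preimage_composable F HM)) (subcat HM) :=
  @Build_Functor (subcat (preimage_composable F HM)) (subcat HM)
    (fun A : C => F A) restr_map restr_id restr_comp.
End Restrict.

Record Square (X : Category) := {
  sqC : X; sqA : X; sqB : X; sqM : X;
  sqf1 : Hom sqC sqA; sqf2 : Hom sqC sqB;
  sqg1 : Hom sqA sqM; sqg2 : Hom sqB sqM;
  sq_comm : comp sqg1 sqf1 = comp sqg2 sqf2
}.

Definition IndepRel (X : Category) := Square X -> Prop.

Definition fsquare (X Y : Category) (F : Functor X Y) (s : Square X) : Square Y.
Proof.
  refine {| sqC := F (sqC s); sqA := F (sqA s); sqB := F (sqB s); sqM := F (sqM s);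
            sqf1 := fmap F (sqf1 s); sqf2 := fmap F (sqf2 s);
            sqg1 := fmap F (sqg1 s); sqg2 := fmap F (sqg2 s) |}.
  rewrite <- !fmap_comp. f_equal. apply sq_comm.
Defined.

Definition preimage_rel (X Y : Category) (F : Functor X Y) (I : IndepRel Y) : IndepRel X :=
  fun s => I (fsquare F s).

Definition uniqueness (X : Category) (I : IndepRel X) : Prop :=
  forall (c a b : X) (f1 : Hom c a) (f2 : Hom c b)
         (m : X) (g1 : Hom a m) (g2 : Hom b m) (h : comp g1 f1 = comp g2 f2)
         (m' : X) (g1' : Hom a m') (g2' : Hom b m') (h' : comp g1' f1 = comp g2' f2),
    I (Build_Square h) -> I (Build_Square h') ->
    exists (n : X) (u : Hom m n) (v : Hom m' n),
      comp u g1 = comp v g1' /\ comp u g2 = comp v g2'.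

(* The amalgamating maps [F m -> n] and [F m' -> n] given by uniqueness in [D_M]
   factor through the multiadjoint family at [n]; since the two given squares share
   their base span, uniqueness of factorizations forces both maps through the same
   member [e_k : F(C_k) -> n], and the factors [m -> C_k], [m' -> C_k] amalgamate the
   squares in [C].  They lie in [F^{-1}(M)] because [M] is left-cancellable. *)
From Stdlib Require Import ProofIrrelevance Eqdep.

Section MultiadjointFamily.
Variables (C D : Category) (F : Functor C D).

Definition multiadjoint_family (d : D) {K : Type} (Ck : K -> C)
    (e : forall k, @Hom D (F (Ck k)) d) : Prop :=
  forall (c : C) (u : @Hom D (F c) d),
    exists (k : K) (f : @Hom C c (Ck k)),
      u = comp (e k) (fmap F f) /\
      forall (k' : K) (f' : @Hom C c (Ck k')),
        u = comp (e k') (fmap F f') ->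
        existT (fun j => @Hom C c (Ck j)) k' f' = existT _ k f.

Variables (d : D) (K : Type) (Ck : K -> C) (e : forall k, @Hom D (F (Ck k)) d).
Hypothesis He : multiadjoint_family d Ck e.

Lemma multiadjoint_factor_unique {c : C} {k k' : K}
    (f : @Hom C c (Ck k)) (f' : @Hom C c (Ck k')) :
  comp (e k) (fmap F f) = comp (e k') (fmap F f') ->
  existT (fun j => @Hom C c (Ck j)) k f = existT _ k' f'.
Proof.
  intros Eff'.
  destruct (He _ (comp (e k) (fmap F f))) as [k0 [f0 [_ Hunique]]].
  rewrite (Hunique k f eq_refl).
  symmetry; exact (Hunique k' f' Eff').
Qed.

Lemma comp_factor_fmap (c x : C) (k : K) (f : @Hom C c (Ck k)) (p : @Hom C x c) :
  comp (comp (e k) (fmap F f)) (fmap F p) = comp (e k) (fmap F (comp f p)).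
Proof. now rewrite fmap_comp, comp_assoc. Qed.

Lemma multiadjoint_common_factor (m m' : C)
    (u : @Hom D (F m) d) (v : @Hom D (F m') d) (x : C)
    (p : @Hom C x m) (q : @Hom C x m') :
  comp u (fmap F p) = comp v (fmap F q) ->
  exists (k : K) (f : @Hom C m (Ck k)) (f' : @Hom C m' (Ck k)),
    u = comp (e k) (fmap F f) /\ v = comp (e k) (fmap F f') /\
    forall (y : C) (p' : @Hom C y m) (q' : @Hom C y m'),
      comp u (fmap F p') = comp v (fmap F q') -> comp f p' = comp f' q'.
Proof.
  intros Epq.
  destruct (He _ u) as [k [f [Eu _]]].
  destruct (He _ v) as [k' [f' [Ev _]]].
  assert (Ekk' : k = k').
  { refine (f_equal (@projT1 _ _) (multiadjoint_factor_unique (comp f p) (comp f' q) _)).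
    now rewrite <- !comp_factor_fmap, <- Eu, <- Ev. }
  subst k'.
  exists k, f, f'; repeat split; [exact Eu | exact Ev |].
  intros y p' q' Epq'.
  apply (inj_pair2 K (fun j => @Hom C y (Ck j))), multiadjoint_factor_unique.
  now rewrite <- !comp_factor_fmap, <- Eu, <- Ev.
Qed.

End MultiadjointFamily.

Arguments multiadjoint_common_factor {C D F d K Ck e} He {m m' u v x p q}.

Lemma subcat_hom_eq (X : Category) (N : MorClass X) (HN : composable N) (A B : X)
    (f g : @Hom (subcat HN) A B) :
  proj1_sig f = proj1_sig g -> f = g.
Proof. apply eq_sig_hprop; intros; apply proof_irrelevance. Qed.

Theorem theorem4p13 (C D : Category) (F : Functor C D) (M : MorClass D)
  (HF : left_multiadjoint F) (HM : composable M) (HL : left_cancellable M)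
  (perp : IndepRel (subcat HM)) :
  uniqueness perp ->
  uniqueness (preimage_rel (restrict F HM) perp).
Proof.
  intros Hu c a b f1 f2 m g1 g2 h m' g1' g2' h' H1 H2.
  destruct (Hu _ _ _ _ _ _ _ _ _ _ _ _ _ H1 H2)
    as [n [[u Mu] [[v Mv] [E1 E2]]]].
  apply (f_equal (@proj1_sig _ _)) in E1, E2; simpl in E1, E2.
  destruct (HF n) as [K [Ck [e He]]].
  destruct (multiadjoint_common_factor He E1) as [k [f [f' [Eu [Ev Hreflect]]]]].
  assert (Mf : M _ _ (fmap F f)) by (apply (HL _ _ _ (e k)); now rewrite <- Eu).
  assert (Mf' : M _ _ (fmap F f')) by (apply (HL _ _ _ (e k)); now rewrite <- Ev).
  exists (Ck k), (exist _ f Mf), (exist _ f' Mf').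
  split; apply subcat_hom_eq; simpl; now apply Hreflect.
Qed.
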